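(* For every positive integer $n$, the number of ordered set partitions of $[n]$ into exactly $3$ blocks that avoid the pattern $123$ is $$\operatorname{op}_{n,3}(123) = \left(\frac{n^2}{8}+\frac{3n}{8}-2\right)2^n+3.$$
   Context: An ordered set partition of $[n]$ into $k$ blocks is a sequence $B_1/B_2/\cdots/B_k$ of nonempty, pairwise disjoint subsets of $[n]$ whose union is $[n]$; the order of the blocks matters, but not the order of elements within a block. For a permutation $\rho=\rho_1\cdots\rho_m\in\mathcal{S}_m$, an ordered partition $B_1/\cdots/B_k$ contains $\rho$ if there are block indices $i_1<i_2<\cdots<i_m$ and elements $b_j\in B_{i_j}$ such that $b_1\cdots b_m$ is order-isomorphic to $\rho$ (i.e. $b_a<b_c$ iff $\rho_a<\rho_c$); otherwise it avoids $\rho$. $\operatorname{op}_{n,k}(\rho)$ denotes the number of ordered partitions of $[n]$ into $k$ blocks that avoid $\rho$. *)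

From mathcomp Require Import all_boot all_order all_algebra all_fingroup.
Set Implicit Arguments. Unset Strict Implicit. Unset Printing Implicit Defensive.

(* The ground set [n] = {1,...,n} is represented by 'I_n = {0,...,n-1}
   (an order-isomorphic relabelling, which does not affect pattern containment). *)

Definition is_ordered_partition (n k : nat) (B : {ffun 'I_k -> {set 'I_n}}) : bool :=
  [forall i, B i != set0] &&
  [forall i, forall j, (i != j) ==> [disjoint B i & B j]] &&
  (\bigcup_(i < k) B i == [set: 'I_n]).

Definition op_contains (n k m : nat) (B : {ffun 'I_k -> {set 'I_n}}) (rho : 'S_m) : bool :=
  [exists I : {ffun 'I_m -> 'I_k}, exists b : {ffun 'I_m -> 'I_n},
     [forall a : 'I_m, forall c : 'I_m, (a < c)%N ==> (I a < I c)%N] &&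
     [forall j : 'I_m, b j \in B (I j)] &&
     [forall a : 'I_m, forall c : 'I_m, ((b a < b c)%N == (rho a < rho c)%N)]].

Definition op_count (n k m : nat) (rho : 'S_m) : nat :=
  #|[set B : {ffun 'I_k -> {set 'I_n}} |
       is_ordered_partition B && ~~ op_contains B rho]|.

From mathcomp Require Import all_boot all_order all_algebra all_fingroup.
From mathcomp Require Import ring zify.
Import GRing.Theory.
Set Implicit Arguments. Unset Strict Implicit. Unset Printing Implicit Defensive.

(* An ordered partition B_1/B_2/B_3 of [n] is the word t_1...t_n recording the
   block of each element, a word that uses every letter; it contains 123 iff
   t contains the subsequence 0 1 2, since an occurrence must use the three
   blocks in order. Words avoiding 0 1 2 are counted by the
   automaton that greedily matches 0 1 2, refined by the set of letters still
   to be used; solving the resulting linear recurrences gives the formula. *)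

Section Subsequences.

Variable T : eqType.

Lemma subseq_nthP (x0 : T) (p s : seq T) :
  subseq p s <-> exists f : nat -> nat,
    [/\ forall i j, i < j < size p -> f i < f j,
        forall i, i < size p -> f i < size s
      & forall i, i < size p -> nth x0 s (f i) = nth x0 p i].
Proof.
elim: s p => [|y s IHs] [|x p] /=.
- by split=> // _; exists id; split=> [i j /andP[]|i|i].
- by split=> // -[f [_ lt_f _]]; move: (lt_f 0 isT); rewrite ltn0.
- by split=> // _; exists id; split=> [i j /andP[]|i|i].
split.
  case: eqP => [<-|_] /IHs [g [g_incr g_lt g_nth]].
    exists (fun i => if i is i'.+1 then (g i').+1 else 0); split.
    - by move=> [|i] [|j] //; rewrite !ltnS; apply: g_incr.
    - by move=> [|i] //; rewrite !ltnS; apply: g_lt.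
    - by move=> [|i] //; rewrite ltnS; apply: g_nth.
  exists (fun i => (g i).+1); split.
  - by move=> i j ij; rewrite ltnS g_incr.
  - by move=> i ip; rewrite ltnS g_lt.
  - exact: g_nth.
case=> f [f_incr f_lt f_nth].
have [f0|f0_pos] := posnP (f 0).
  have <- : x = y by move: (f_nth 0 isT); rewrite f0.
  have fS_pos i : i < size p -> 0 < f i.+1 by move=> ip; rewrite -f0 f_incr.
  rewrite eqxx; apply/IHs; exists (fun i => (f i.+1).-1).
  split=> [i j /andP[ij jp]|i ip|i ip].
  - have := f_incr i.+1 j.+1; rewrite !ltnS ij jp => /(_ isT).
    by have := fS_pos i (ltn_trans ij jp); lia.
  - by have := f_lt i.+1 ip; have := fS_pos i ip; lia.
  - by move: (f_nth i.+1 ip); rewrite -(prednK (fS_pos i ip)).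
have f_pos i : i < (size p).+1 -> 0 < f i.
  by case: i => // i ip; apply: leq_trans f0_pos (ltnW (f_incr _ _ _)).
suff: subseq (x :: p) s by case: eqP => // _; apply: cons_subseq.
apply/IHs; exists (fun i => (f i).-1).
split=> [i j /andP[ij jp]|i ip|i ip].
- have := f_incr i j; rewrite ij jp => /(_ isT).
  by have := f_pos i (ltn_trans ij jp); lia.
- by have := f_lt i ip; have := f_pos i ip; lia.
- by move: (f_nth i ip); rewrite -(prednK (f_pos i ip)).
Qed.

Definition residual (x : T) (p : seq T) : seq T :=
  if p is y :: p' then if y == x then p' else p else p.

Lemma subseq_residual x p s : subseq p (x :: s) = subseq (residual x p) s.
Proof. by case: p => [|y p] /=; rewrite ?sub0seq. Qed.

End Subsequences.

Section AvoidingWords.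

Variable T : finType.

Lemma card_tuple_cons n (P : seq T -> bool) :
  #|[pred t : n.+1.-tuple T | P t]|
  = \sum_(x : T) #|[pred t : n.-tuple T | P (x :: t)]|.
Proof.
rewrite -sum1_card.
rewrite (reindex (fun p : T * n.-tuple T => [tuple of p.1 :: p.2])); last first.
  exists (fun t : n.+1.-tuple T => (thead t, behead_tuple t)).
    by move=> [x t] _ /=; congr pair; apply: val_inj.
  by move=> t _; rewrite [in RHS](tuple_eta t).
rewrite -(pair_big_dep xpredT (fun x t => P (x :: val t)) (fun _ _ => 1%N)) /=.
by apply: eq_bigr => x _; rewrite sum1_card.
Qed.

Lemma card_tuple0 (P : seq T -> bool) : #|[pred t : 0.-tuple T | P t]| = P [::].
Proof.
rewrite -sum1_card (eq_bigl (fun t : 0.-tuple T => (t == [tuple]) && P [::])).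
  case: (P [::]); last by rewrite big_pred0 // => t; rewrite andbF.
  by rewrite (eq_bigl (pred1 [tuple])) ?big_pred1_eq // => t; rewrite andbT.
move=> t; rewrite inE /=; have -> : t == [tuple] by apply/eqP/tuple0.
by case: t => [[|]].
Qed.

Definition avoid_count n (p R : seq T) : nat :=
  #|[pred t : n.-tuple T | ~~ subseq p t & all [in t] R]|.

Lemma avoid_count0 p R : avoid_count 0 p R = (p != [::]) && (R == [::]).
Proof.
rewrite /avoid_count (card_tuple0 (fun s => ~~ subseq p s && all [in s] R)).
by rewrite subseq0; case: R.
Qed.

Lemma avoid_countS n p R :
  avoid_count n.+1 p R =
  \sum_(x : T) avoid_count n (residual x p) (filter (predC1 x) R).
Proof.
rewrite /avoid_count (card_tuple_cons _ (fun s => ~~ subseq p s && all [in s] R)).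
apply: eq_bigr => x _.
apply: eq_card => t; rewrite !inE subseq_residual all_filter; congr andb.
by apply: eq_all => r; rewrite in_cons /=; case: eqP.
Qed.

Lemma avoid_count_nil n R : avoid_count n [::] R = 0.
Proof. by apply: eq_card0 => t; rewrite inE sub0seq. Qed.

Lemma avoid_count_cover1 n x : avoid_count n [:: x] [:: x] = 0.
Proof. by apply: eq_card0 => t; rewrite inE sub1seq /= andbT andNb. Qed.

End AvoidingWords.

Section WordsOfPartitions.

Variables n k : nat.

Definition blocks_of (t : n.-tuple 'I_k) : {ffun 'I_k -> {set 'I_n}} :=
  [ffun i => [set x | tnth t x == i]].

Lemma blocks_of_inj : injective blocks_of.
Proof.
move=> t1 t2 eq_t; apply: eq_from_tnth => x.
have := congr1 (fun B : {ffun 'I_k -> {set 'I_n}} => x \in B (tnth t1 x)) eq_t.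
by rewrite !ffunE !inE eqxx => /esym/eqP.
Qed.

Lemma ordered_partition_blocks_of t :
  is_ordered_partition (blocks_of t) = [forall i, i \in t].
Proof.
have disjoint_blocks : [forall i, forall j, (i != j) ==>
    [disjoint blocks_of t i & blocks_of t j]].
  apply/forallP => i; apply/forallP => j; apply/implyP => ij.
  rewrite -setI_eq0; apply/eqP/setP => x; rewrite !inE !ffunE !inE.
  by case: eqP => // ->; rewrite (negbTE ij).
have cover_blocks : \bigcup_(i < k) blocks_of t i == [set: 'I_n].
  apply/eqP/setP => x; rewrite inE; apply/bigcupP; exists (tnth t x) => //.
  by rewrite ffunE inE.
rewrite /is_ordered_partition disjoint_blocks cover_blocks !andbT.
apply/forallP/forallP => nonempty i.
  have /set0Pn[x] := nonempty i.
  by rewrite ffunE inE => /eqP <-; apply: mem_tnth.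
by have /tnthP[x ->] := nonempty i; apply/set0Pn; exists x; rewrite ffunE inE.
Qed.

Lemma ordered_partition_blocks B :
  is_ordered_partition B -> exists t, B = blocks_of t.
Proof.
case/andP => /andP[_ disjointB] /eqP coverB.
have blockP x : exists i, x \in B i.
  have : x \in \bigcup_(i < k) B i by rewrite coverB inE.
  by case/bigcupP => i _; exists i.
have block_uniq x i j : x \in B i -> x \in B j -> i = j.
  move=> xi xj; case: (eqVneq i j) => // ij.
  have /disjointFr/(_ xi) := implyP (forallP (forallP disjointB i) j) ij.
  by rewrite xj.
exists [tuple xchoose (blockP x) | x < n]; apply/ffunP => i; apply/setP => x.
have x_in := xchooseP (blockP x).
rewrite ffunE inE tnth_mktuple; apply/idP/eqP => [xi|<-] //.
exact: block_uniq x_in xi.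
Qed.

Lemma op_count_words m (rho : 'S_m) :
  op_count n k rho =
  #|[pred t : n.-tuple 'I_k |
      [forall i, i \in t] & ~~ op_contains (blocks_of t) rho]|.
Proof.
rewrite /op_count -(card_imset _ blocks_of_inj); apply: eq_card => B.
rewrite inE; apply/andP/imsetP => [[partB avoidB]|[t]].
  have [t defB] := ordered_partition_blocks partB.
  by exists t; rewrite // inE -ordered_partition_blocks_of -defB partB.
by rewrite inE -ordered_partition_blocks_of => /andP[? ?] ->.
Qed.

End WordsOfPartitions.

Definition o0 : 'I_3 := @Ordinal 3 0 isT.
Definition o1 : 'I_3 := @Ordinal 3 1 isT.
Definition o2 : 'I_3 := @Ordinal 3 2 isT.

Lemma nth_ord3 (j : 'I_3) : nth o0 [:: o0; o1; o2] j = j.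
Proof. by apply: val_inj; case: j => [[|[|[|?]]] ?]. Qed.

Lemma mem_ord3 (j : 'I_3) : j \in [:: o0; o1; o2].
Proof. by rewrite -[j]nth_ord3 mem_nth. Qed.

Lemma forall_mem_ord3 (s : seq 'I_3) :
  [forall i, i \in s] = all [in s] [:: o0; o1; o2].
Proof.
apply/forallP/allP => [in_s i _ | in_s i]; first exact: in_s.
exact/in_s/mem_ord3.
Qed.

Lemma sum_ord3 (F : 'I_3 -> nat) : \sum_(i : 'I_3) F i = F o0 + F o1 + F o2.
Proof.
rewrite !big_ord_recl big_ord0 addn0 addnA.
by congr (F _ + F _ + F _); apply: val_inj.
Qed.

Lemma op_contains_blocks_of_123 n (t : n.-tuple 'I_3) :
  op_contains (blocks_of t) (1 : 'S_3) = subseq [:: o0; o1; o2] t.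
Proof.
apply/idP/idP => [|/(subseq_nthP o0)[f [f_incr f_lt f_nth]]].
  case/existsP => I /existsP[b /andP[/andP[I_incr b_in] b_iso]].
  have I_id j : I j = j.
    have I_lt (a c : 'I_3) : a < c -> I a < I c.
      by move/implyP: (forallP (forallP I_incr a) c).
    have [I0 I1 I2] : [/\ I o0 = 0 :> nat, I o1 = 1 :> nat & I o2 = 2 :> nat].
      have := I_lt o0 o1 isT; have := I_lt o1 o2 isT.
      by case: (I o0) (I o1) (I o2) => [x ?] [y ?] [z ?] /= *; split; lia.
    by move: (mem_ord3 j); rewrite !inE => /or3P[]/eqP->; apply: ord_inj.
  have b_lt (a c : 'I_3) : a < c -> b a < b c.
    by move=> ac; have := forallP (forallP b_iso a) c; rewrite !perm1 ac => /eqP.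
  apply/(subseq_nthP o0); exists (fun i => nat_of_ord (b (inord i))).
  split=> [i j /andP[ij j3]|i i3|i i3].
  - by apply: b_lt; rewrite !inordK // (ltn_trans ij j3).
  - by rewrite size_tuple.
  - have := forallP b_in (inord i); rewrite ffunE inE I_id => /eqP.
    by rewrite -tnth_nth => ->; rewrite -[in RHS](inordK i3) nth_ord3.
apply/existsP; exists [ffun j => j]; apply/existsP.
have f_ltn (j : 'I_3) : f j < n by rewrite -(size_tuple t) f_lt.
exists [ffun j => Ordinal (f_ltn j)]; rewrite -andbA; apply/and3P; split.
- by apply/forallP => a; apply/forallP => c; rewrite !ffunE; apply/implyP.
- by apply/forallP => j; rewrite !ffunE inE (tnth_nth o0) /= f_nth // nth_ord3.
apply/forallP => a; apply/forallP => c; rewrite !ffunE !perm1 /=.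
have [ac|] := ltnP a c; first by apply/eqP/f_incr; rewrite ac /=.
rewrite eqbF_neg -leqNgt leq_eqVlt => /orP[/eqP/val_inj->|ca] //.
by apply/ltnW/f_incr; rewrite ca /=.
Qed.

Lemma avoid_count3S n p R :
  avoid_count n.+1 p R =
  avoid_count n (residual o0 p) (filter (predC1 o0) R)
  + avoid_count n (residual o1 p) (filter (predC1 o1) R)
  + avoid_count n (residual o2 p) (filter (predC1 o2) R).
Proof. by rewrite avoid_countS sum_ord3. Qed.

Local Open Scope ring_scope.

Local Notation A n p R := ((avoid_count n p R)%:R : rat).

Lemma avoid_count_2 n : A n [:: o2] [::] = 2 ^+ n.
Proof.
elim: n => [|n IHn]; first by rewrite avoid_count0.
by rewrite avoid_count3S /= avoid_count_nil !natrD IHn exprS; ring.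
Qed.

Lemma avoid_count_12 n : A n [:: o1; o2] [::] = 2 ^+ n + n%:R * 2 ^+ n / 2.
Proof.
elim: n => [|n IHn]; first by rewrite avoid_count0 /=; field.
rewrite avoid_count3S /= !natrD IHn avoid_count_2.
by rewrite exprS -[n.+1%:R]natr1; field.
Qed.

Lemma avoid_count_12_1 n : A n [:: o1; o2] [:: o1] = n%:R * 2 ^+ n / 2.
Proof.
elim: n => [|n IHn]; first by rewrite avoid_count0 /=; field.
rewrite avoid_count3S /= !natrD IHn avoid_count_2.
by rewrite exprS -[n.+1%:R]natr1; field.
Qed.

Lemma avoid_count_12_2 n : A n [:: o1; o2] [:: o2] = n%:R * 2 ^+ n / 2.
Proof.
elim: n => [|n IHn]; first by rewrite avoid_count0 /=; field.
rewrite avoid_count3S /= !natrD IHn avoid_count_cover1 avoid_count_12.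
by rewrite exprS -[n.+1%:R]natr1; field.
Qed.

Lemma avoid_count_12_12 n :
  A n [:: o1; o2] [:: o1; o2] = n%:R * 2 ^+ n / 2 - 2 ^+ n + 1.
Proof.
elim: n => [|n IHn]; first by rewrite avoid_count0 /=; field.
rewrite avoid_count3S /= !natrD IHn avoid_count_cover1 avoid_count_12_1.
by rewrite exprS -[n.+1%:R]natr1; field.
Qed.

(* The right-hand side is C(n,1) 2^(n-1) + C(n,2) 2^(n-2). *)
Lemma avoid_count_012_0 n :
  A n [:: o0; o1; o2] [:: o0]
  = n%:R * 2 ^+ n / 2 + n%:R * (n%:R - 1) * 2 ^+ n / 8.
Proof.
elim: n => [|n IHn]; first by rewrite avoid_count0 /=; field.
rewrite avoid_count3S /= !natrD IHn avoid_count_12.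
by rewrite exprS -[n.+1%:R]natr1; field.
Qed.

Lemma avoid_count_012_01 n :
  A n [:: o0; o1; o2] [:: o0; o1]
  = n%:R * 2 ^+ n / 2 + n%:R * (n%:R - 1) * 2 ^+ n / 8 - 2 ^+ n + 1.
Proof.
elim: n => [|n IHn]; first by rewrite avoid_count0 /=; field.
rewrite avoid_count3S /= !natrD IHn avoid_count_012_0 avoid_count_12_1.
by rewrite exprS -[n.+1%:R]natr1; field.
Qed.

Lemma avoid_count_012_02 n :
  A n [:: o0; o1; o2] [:: o0; o2]
  = n%:R * 2 ^+ n / 2 + n%:R * (n%:R - 1) * 2 ^+ n / 8 - 2 ^+ n + 1.
Proof.
elim: n => [|n IHn]; first by rewrite avoid_count0 /=; field.
rewrite avoid_count3S /= !natrD IHn avoid_count_012_0 avoid_count_12_2.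
by rewrite exprS -[n.+1%:R]natr1; field.
Qed.

Lemma avoid_count_012_012 n : (0 < n)%N ->
  A n [:: o0; o1; o2] [:: o0; o1; o2]
  = (n%:R ^+ 2 / 8 + 3 * n%:R / 8 - 2) * 2 ^+ n + 3.
Proof.
case: n => // n _.
rewrite avoid_count3S /= !natrD avoid_count_12_12.
rewrite avoid_count_012_02 avoid_count_012_01.
by rewrite (exprS (2 : rat)) -[n.+1%:R]natr1; field.
Qed.

Theorem theorem2 (n : nat) (hn : (0 < n)%N) :
  ((op_count n 3 (1 : 'S_3))%:R : rat)
  = ((n%:R ^+ 2 / 8 + 3 * n%:R / 8 - 2) * 2 ^+ n + 3 : rat).
Proof.
rewrite op_count_words -avoid_count_012_012 //; congr (_%:R).
apply: eq_card => t; rewrite !inE forall_mem_ord3 op_contains_blocks_of_123.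
exact: andbC.
Qed.
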